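(* Let $\rho$ be an increasing continuous function on $[0,\infty)$, continuously differentiable on $(0,\infty)$, with $\lim_{x\to0}\rho'(x)=0$. Then for all sufficiently small positive $x$ and $x^*$ with $x<x^*$, setting $z=(1-\rho(x))e^{ix}$, we have $2|e^{ix^*}-z|\ge\rho(x^* )$. *)

From Stdlib Require Import Reals.
From Coquelicot Require Export Coquelicot.
Open Scope R_scope.

Definition expi (t : R) : C := (cos t, sin t).

(* Put a = x* - x.  Rotating by e^{-ix} gives |e^{ix*} - z| = |e^{ia} - (1 - rho x)|, and
   twice a modulus dominates real part plus imaginary part, so
   2 |e^{ix*} - z| >= rho x + (cos a - 1 + sin a) >= rho x + a/4 for 0 < a <= 1.
   Since rho' -> 0 at 0+, the mean value theorem gives rho x* <= rho x + a/4 near 0. *)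

From Stdlib Require Import Reals Lra.
From Coquelicot Require Import Coquelicot.
Open Scope R_scope.

Lemma expi_add (s t : R) : expi (s + t) = Cmult (expi s) (expi t).
Proof.
  unfold expi, Cmult; simpl.
  rewrite cos_plus, sin_plus.
  f_equal; ring.
Qed.

Lemma Cmod_expi (t : R) : Cmod (expi t) = 1.
Proof.
  unfold expi, Cmod; simpl fst; simpl snd.
  replace (cos t ^ 2 + sin t ^ 2) with 1; [apply sqrt_1 |].
  rewrite <- (sin2_cos2 t); unfold Rsqr; ring.
Qed.

Lemma Cmod_expi_sub_scal (r s t : R) :
  Cmod (Cminus (expi t) (Cmult (RtoC r) (expi s))) = Cmod (Cminus (expi (t - s)) (RtoC r)).
Proof.
  replace (Cminus (expi t) (Cmult (RtoC r) (expi s)))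
    with (Cmult (expi s) (Cminus (expi (t - s)) (RtoC r))).
  - rewrite Cmod_mult, Cmod_expi; ring.
  - replace t with (s + (t - s)) at 2 by ring.
    rewrite expi_add.
    apply injective_projections; simpl; ring.
Qed.

Lemma Re_add_Im_le_2Cmod (z : C) : Re z + Im z <= 2 * Cmod z.
Proof.
  pose proof (Cmod2_alt z) as Hmod2.
  pose proof (Cmod_ge_0 z).
  destruct (Rle_or_lt (Re z + Im z) 0); [lra |].
  apply Rsqr_incr_0_var; unfold Rsqr; nra.
Qed.

Lemma cos_sub1_add_sin_ge (a : R) : 0 <= a -> a <= 1 -> a / 4 <= cos a - 1 + sin a.
Proof.
  intros Ha0 Ha1.
  destruct (pre_sin_bound a 0) as [Hsin _]; try lra.
  destruct (pre_cos_bound a 0) as [Hcos _]; try lra.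
  simpl in Hsin, Hcos.
  unfold sin_approx, cos_approx, sin_term, cos_term in Hsin, Hcos; simpl in Hsin, Hcos.
  nra.
Qed.

Lemma increment_le_of_Derive_le (f : R -> R) (k a b : R) : a < b ->
  (forall c, a <= c <= b -> ex_derive f c) ->
  (forall c, a < c < b -> Derive f c <= k) ->
  f b - f a <= k * (b - a).
Proof.
  intros Hab Hdf Hbound.
  destruct (MVT_cor2 f (Derive f) a b Hab) as [c [Hmvt Hc]].
  { intros c Hc; apply is_derive_Reals, Derive_correct, Hdf, Hc. }
  rewrite Hmvt; apply Rmult_le_compat_r; [lra | exact (Hbound c Hc)].
Qed.

Lemma filterlim_at_right_small (f : R -> R) (a l eps : R) : 0 < eps ->
  filterlim f (at_right a) (locally l) ->
  exists d : posreal, forall c, a < c < a + d -> Rabs (f c - l) < eps.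
Proof.
  intros Heps Hlim.
  destruct (Hlim (fun y => Rabs (y - l) < eps)) as [d Hd].
  { exists (mkposreal eps Heps); intros y Hy; exact Hy. }
  exists d; intros c Hc.
  apply Hd; [| lra].
  change (Rabs (c - a) < d); rewrite Rabs_right; lra.
Qed.

Theorem mainTheorem12 (rho : R -> R)
  (* increasing on [0, oo) *)
  (Hinc : forall x y, 0 <= x -> x < y -> rho x < rho y)
  (* continuous on [0, oo) (one-sided at 0) *)
  (Hcont : forall x, 0 <= x ->
     filterlim rho (within (fun y => 0 <= y) (locally x)) (locally (rho x)))
  (* continuously differentiable on (0, oo) *)
  (Hder : forall x, 0 < x -> ex_derive rho x)
  (Hdercont : forall x, 0 < x -> continuous (Derive rho) x)
  (* lim_{x -> 0+} rho'(x) = 0 *)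
  (Hlim0 : filterlim (Derive rho) (at_right 0) (locally 0)) :
  exists delta : R, 0 < delta /\
    forall x xs : R, 0 < x -> x < xs -> xs < delta ->
      2 * Cmod (Cminus (expi xs) (Cmult (RtoC (1 - rho x)) (expi x))) >= rho xs.
Proof.
  destruct (filterlim_at_right_small (Derive rho) 0 0 (1/4) ltac:(lra) Hlim0) as [d Hd].
  exists (Rmin d 1); split; [apply Rmin_pos; [apply cond_pos | lra] |].
  intros x xs Hx Hxxs Hxs.
  pose proof (Rmin_l d 1); pose proof (Rmin_r d 1).
  assert (Hrho : rho xs - rho x <= 1/4 * (xs - x)).
  { apply increment_le_of_Derive_le; [lra | intros c Hc; apply Hder; lra |].
    intros c Hc; specialize (Hd c ltac:(lra)).
    rewrite Rminus_0_r in Hd; apply Rabs_def2 in Hd; lra. }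
  rewrite Cmod_expi_sub_scal.
  pose proof (Re_add_Im_le_2Cmod (Cminus (expi (xs - x)) (RtoC (1 - rho x)))) as Hmod.
  pose proof (cos_sub1_add_sin_ge (xs - x) ltac:(lra) ltac:(lra)).
  simpl in Hmod; lra.
Qed.
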